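(* Let $\mathcal{X},\mathcal{Y}$ be recursively presented metric spaces, $x\in\mathcal{X}$, $y\in\mathcal{Y}$. Then $x\leq_M y$ if and only if $x'\leq_1 y'$.
   Context: A recursively presented metric space is a Polish space with compatible complete metric $d$ and a dense sequence $(a_i)$ such that the relations $d(a_i,a_j)<q_r$ and $d(a_i,a_j)\leq q_r$ are recursive in $(i,j,r)$, where $(q_r)$ is a fixed recursive enumeration of the positive rationals; its basic balls are $B_{i,r}=\{x:d(x,a_i)<q_r\}$, coded by $\langle i,r\rangle$. For $x\in\mathcal{X}$ let $\mathrm{Nbase}(x)=\{\langle i,r\rangle: x\in B^{\mathcal{X}}_{i,r}\}$. For $A,B\subseteq\omega$, $A\leq_e B$ (enumeration reducibility) means there is a c.e. set $P$ of pairs $(k,D)$ with $D$ a finite set such that $A=\{k:\exists D\,((k,D)\in P\wedge D\subseteq B)\}$. Define $x\leq_M y$ iff $\mathrm{Nbase}(x)\leq_e\mathrm{Nbase}(y)$. The jump of $x\in\mathcal{X}$ is $x'=\{e\in\omega: x\in\bigcup_{\langle i,r\rangle\in W_e}B^{\mathcal{X}}_{i,r}\}$, where $W_e$ is the $e$-th c.e. subset of $\omega$. $A\leq_1 B$ means there is a recursive injection $h$ with $k\in A\iff h(k)\in B$. *)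

From Stdlib Require Import Reals Arith Cantor.
Open Scope R_scope.

Definition pr (a b : nat) : nat := Cantor.to_nat (a, b).
Definition p1 (n : nat) : nat := fst (Cantor.of_nat n).
Definition p2 (n : nat) : nat := snd (Cantor.of_nat n).

(* Partial recursive functions nat -> nat (unary, via pairing).        *)
Inductive prf : Type :=
| PZero : prf
| PSucc : prf
| PId   : prf
| PFst  : prf
| PSnd  : prf
| PComp : prf -> prf -> prf
| PPair : prf -> prf -> prf
| PPrec : prf -> prf -> prf       (* h<a,0> = f a ; h<a,n+1> = g <a,<n,h<a,n>>> *)
| PMu   : prf -> prf.             (* x |-> least n with f<x,n> = 0, all earlier defined *)

Inductive eval : prf -> nat -> nat -> Prop :=
| ev_zero x : eval PZero x 0
| ev_succ x : eval PSucc x (S x)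
| ev_id x : eval PId x x
| ev_fst x : eval PFst x (p1 x)
| ev_snd x : eval PSnd x (p2 x)
| ev_comp f g x y z : eval g x y -> eval f y z -> eval (PComp f g) x z
| ev_pair f g x y z : eval f x y -> eval g x z -> eval (PPair f g) x (pr y z)
| ev_prec0 f g a v : eval f a v -> eval (PPrec f g) (pr a 0) v
| ev_precS f g a n v w :
    eval (PPrec f g) (pr a n) v -> eval g (pr a (pr n v)) w ->
    eval (PPrec f g) (pr a (S n)) w
| ev_mu f x n :
    eval f (pr x n) 0 ->
    (forall m, (m < n)%nat -> exists v, v <> 0%nat /\ eval f (pr x m) v) ->
    eval (PMu f) x n.

(* Goedel numbering: e decodes to a program (fuel e suffices since all
   sub-codes are smaller than e).  Every program has a code. *)
Fixpoint dec (fuel n : nat) : prf :=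
  match fuel with
  | O => PZero
  | S k =>
    let t := (n mod 9)%nat in
    let m := (n / 9)%nat in
    match t with
    | 0 => PZero
    | 1 => PSucc
    | 2 => PId
    | 3 => PFst
    | 4 => PSnd
    | 5 => PComp (dec k (p1 m)) (dec k (p2 m))
    | 6 => PPair (dec k (p1 m)) (dec k (p2 m))
    | 7 => PPrec (dec k (p1 m)) (dec k (p2 m))
    | _ => PMu (dec k m)
    end
  end%nat.

Definition code (e : nat) : prf := dec e e.

Definition W (e : nat) : nat -> Prop := fun n => exists v, eval (code e) n v.

Definition ce (A : nat -> Prop) : Prop :=
  exists f : prf, forall n, A n <-> exists v, eval f n v.

Definition recursive_set (A : nat -> Prop) : Prop :=
  exists f : prf, forall n, exists v, eval f n v /\ (v = 0%nat <-> A n).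

Definition recursive_fun (h : nat -> nat) : Prop :=
  exists f : prf, forall n, eval f n (h n).

Definition canon_fin (u : nat) : nat -> Prop := fun i => Nat.testbit u i = true.

Definition e_red (A B : nat -> Prop) : Prop :=
  exists P : nat -> Prop, ce P /\
    forall k, A k <-> exists u, P (pr k u) /\ forall i, canon_fin u i -> B i.

Definition one_red (A B : nat -> Prop) : Prop :=
  exists h : nat -> nat, recursive_fun h /\
    (forall m n, h m = h n -> m = n) /\
    (forall k, A k <-> B (h k)).

Definition q (r : nat) : R := INR (S (p1 r)) / INR (S (p2 r)).

Record RecPresMetric (X : Type) : Type := {
  dist : X -> X -> R;
  pt : nat -> X;
  dist_nonneg : forall x y, 0 <= dist x y;
  dist_eq0 : forall x y, dist x y = 0 <-> x = y;
  dist_sym : forall x y, dist x y = dist y x;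
  dist_tri : forall x y z, dist x z <= dist x y + dist y z;
  dist_complete : forall s : nat -> X,
    (forall eps, 0 < eps -> exists N, forall m n, (N <= m)%nat -> (N <= n)%nat ->
        dist (s m) (s n) < eps) ->
    exists l, forall eps, 0 < eps -> exists N, forall n, (N <= n)%nat ->
        dist (s n) l < eps;
  pt_dense : forall x eps, 0 < eps -> exists i, dist x (pt i) < eps;
  rec_lt : recursive_set (fun k =>
      dist (pt (p1 k)) (pt (p1 (p2 k))) < q (p2 (p2 k)));   (* k = <i,<j,r>> *)
  rec_le : recursive_set (fun k =>
      dist (pt (p1 k)) (pt (p1 (p2 k))) <= q (p2 (p2 k)))
}.

Arguments dist {X} _ _ _.
Arguments pt {X} _ _.

(* basic ball B_{i,r} coded by <i,r> *)
Definition in_ball {X} (M : RecPresMetric X) (k : nat) (x : X) : Prop :=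
  dist M x (pt M (p1 k)) < q (p2 k).

Definition Nbase {X} (M : RecPresMetric X) (x : X) : nat -> Prop :=
  fun k => in_ball M k x.

Definition M_red {X Y} (MX : RecPresMetric X) (x : X)
  (MY : RecPresMetric Y) (y : Y) : Prop :=
  e_red (Nbase MX x) (Nbase MY y).

Definition jump {X} (M : RecPresMetric X) (x : X) : nat -> Prop :=
  fun e => exists k, W e k /\ in_ball M k x.

(* Both directions rest on the uniform enumerability of the sets [W e], realised by a
   universal program that searches for a certificate of a computation: a finite set of
   triples <c, x, v> each of which follows from others in the set by one rule of [eval].
   Checking a certificate is primitive recursive.

   If h 1-reduces x' to y', let [E k] be an index of {k}.  Then x lies in the ball k iff
   [E k] is in x' iff [h (E k)] is in y' iff y lies in some ball b of [W (h (E k))]; the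
   pairs (k, {b}) with b in [W (h (E k))] thus enumerate Nbase(x) from Nbase(y).

   Conversely, given the enumeration P, let [h e] enumerate the balls B(a_j, 1/(s+1))
   labelled by (k, D) with k in [W e], (k, D) in P, and d(a_j, a_i) < q_i - 1/(s+1) for
   each ball i in D, a condition decidable in a recursive presentation.  By the triangle
   inequality such a ball contains y only if every ball of D does, and by density such a
   ball around y exists whenever every ball of D contains y.  So y is in some ball of
   [W (h e)] iff x is in some ball of [W e]; [h] is injective since [e] is a component of
   the index [h e]. *)

From Pilot Require Import Defs.
From Stdlib Require Import Reals Arith Cantor Lia Lra Setoid Morphisms Classical IndefiniteDescription.
Open Scope nat_scope.

Lemma p1_pr a b : p1 (pr a b) = a.
Proof. unfold p1, pr. now rewrite Cantor.cancel_of_to. Qed.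

Lemma p2_pr a b : p2 (pr a b) = b.
Proof. unfold p2, pr. now rewrite Cantor.cancel_of_to. Qed.

Lemma pr_p1p2 n : pr (p1 n) (p2 n) = n.
Proof. unfold p1, p2, pr. rewrite <- surjective_pairing. apply Cantor.cancel_to_of. Qed.

Lemma pr_inj a b c d : pr a b = pr c d -> a = c /\ b = d.
Proof.
  intro H. pose proof (f_equal p1 H). pose proof (f_equal p2 H).
  rewrite !p1_pr in *; rewrite !p2_pr in *. auto.
Qed.

Lemma pr_ge a b : a + b <= pr a b.
Proof. unfold pr. pose proof (Cantor.to_nat_non_decreasing a b). lia. Qed.

Lemma pr_lt_S a n : pr a n < pr a (S n).
Proof.
  unfold pr. pose proof (Cantor.to_nat_spec a n). pose proof (Cantor.to_nat_spec a (S n)). nia.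
Qed.

Lemma p1_le n : p1 n <= n.
Proof. rewrite <- (pr_p1p2 n) at 2. pose proof (pr_ge (p1 n) (p2 n)). lia. Qed.

Lemma p2_le n : p2 n <= n.
Proof. rewrite <- (pr_p1p2 n) at 2. pose proof (pr_ge (p1 n) (p2 n)). lia. Qed.

Global Opaque pr p1 p2.

(** * Evaluation of partial recursive programs *)

Section EvalInduction.
Variable P : prf -> nat -> nat -> Prop.
Hypothesis P_zero : forall x, P PZero x 0.
Hypothesis P_succ : forall x, P PSucc x (S x).
Hypothesis P_id : forall x, P PId x x.
Hypothesis P_fst : forall x, P PFst x (p1 x).
Hypothesis P_snd : forall x, P PSnd x (p2 x).
Hypothesis P_comp : forall f g x y z,
  eval g x y -> P g x y -> eval f y z -> P f y z -> P (PComp f g) x z.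
Hypothesis P_pair : forall f g x y z,
  eval f x y -> P f x y -> eval g x z -> P g x z -> P (PPair f g) x (pr y z).
Hypothesis P_prec0 : forall f g a v, eval f a v -> P f a v -> P (PPrec f g) (pr a 0) v.
Hypothesis P_precS : forall f g a n v w,
  eval (PPrec f g) (pr a n) v -> P (PPrec f g) (pr a n) v ->
  eval g (pr a (pr n v)) w -> P g (pr a (pr n v)) w -> P (PPrec f g) (pr a (S n)) w.
Hypothesis P_mu : forall f x n, eval f (pr x n) 0 -> P f (pr x n) 0 ->
  (forall m, m < n -> exists v, v <> 0 /\ eval f (pr x m) v /\ P f (pr x m) v) ->
  P (PMu f) x n.

(* The generated [eval_ind] gives no hypothesis for the evaluations hidden under
   the existential of [ev_mu]. *)
Fixpoint eval_ind_strong p x v (H : eval p x v) {struct H} : P p x v.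
Proof.
  destruct H.
  - apply P_zero.
  - apply P_succ.
  - apply P_id.
  - apply P_fst.
  - apply P_snd.
  - eapply P_comp; eauto.
  - eapply P_pair; eauto.
  - eapply P_prec0; eauto.
  - eapply P_precS; eauto.
  - apply P_mu; auto. intros m Hm. destruct (H0 m Hm) as [w [Hw Hev]].
    exists w. split; [exact Hw|]. split; [exact Hev|]. exact (eval_ind_strong _ _ _ Hev).
Qed.
End EvalInduction.

Lemma eval_comp_inv f g x v : eval (PComp f g) x v -> exists y, eval g x y /\ eval f y v.
Proof. intro H. inversion H. eauto. Qed.

Lemma eval_pair_inv f g x v :
  eval (PPair f g) x v -> exists y z, v = pr y z /\ eval f x y /\ eval g x z.
Proof. intro H. inversion H. eauto. Qed.

Lemma eval_prec_inv f g x v : eval (PPrec f g) x v ->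
  (exists a, x = pr a 0 /\ eval f a v) \/
  (exists a n w, x = pr a (S n) /\ eval (PPrec f g) (pr a n) w /\ eval g (pr a (pr n w)) v).
Proof. intro H. inversion H; eauto 10. Qed.

Lemma eval_mu_inv f x v : eval (PMu f) x v ->
  eval f (pr x v) 0 /\ forall m, m < v -> exists w, w <> 0 /\ eval f (pr x m) w.
Proof. intro H. inversion H. auto. Qed.

Lemma eval_functional p x v : eval p x v -> forall v', eval p x v' -> v = v'.
Proof.
  intro H. induction H using eval_ind_strong; intros v' H'.
  1-5: now inversion H'.
  - apply eval_comp_inv in H' as [y' [H1 H2]]. apply IHeval1 in H1. subst. auto.
  - apply eval_pair_inv in H' as [y' [z' [-> [H1 H2]]]]. f_equal; auto.
  - apply eval_prec_inv in H' as [[a' [E H1]]|[a' [n' [w' [E _]]]]];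
      apply pr_inj in E as [Ea En]; subst.
    + auto.
    + discriminate.
  - apply eval_prec_inv in H' as [[a' [E H1]]|[a' [n' [w' [E [H1 H2]]]]]];
      apply pr_inj in E as [Ea En]; subst.
    + discriminate.
    + injection En as <-. apply IHeval1 in H1. subst. auto.
  - apply eval_mu_inv in H' as [Hzero' Hbelow'].
    destruct (Nat.lt_trichotomy n v') as [Hl|[Hl|Hl]]; auto.
    + destruct (Hbelow' n Hl) as [w [Hw Hev]]. apply IHeval in Hev. congruence.
    + match goal with Hbelow : forall m, m < n -> exists v, _ |- _ =>
        destruct (Hbelow v' Hl) as [w [Hw [_ IHw]]] end.
      apply IHw in Hzero'. congruence.
Qed.

(** * Goedel numbering *)

Lemma div9_le_pred n k : n <= S k -> n / 9 <= k.
Proof. intro H. destruct n. simpl. lia. assert (S n / 9 < S n) by (apply Nat.div_lt; lia). lia. Qed.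

Lemma dec_fuel_irrelevant k1 : forall k2 n, n <= k1 -> n <= k2 -> dec k1 n = dec k2 n.
Proof.
  induction k1 as [|k IH]; intros k2 n H1 H2.
  - assert (n = 0) by lia. subst. destruct k2; reflexivity.
  - destruct k2 as [|k'].
    + assert (n = 0) by lia. subst. reflexivity.
    + cbn [dec]. pose proof (div9_le_pred n k H1). pose proof (div9_le_pred n k' H2).
      pose proof (p1_le (n/9)). pose proof (p2_le (n/9)).
      destruct (n mod 9) as [|[|[|[|[|[|[|[|[|]]]]]]]]]; try reflexivity;
      f_equal; apply IH; lia.
Qed.

Lemma code_unfold c : code c = match c mod 9 with
  | 0 => PZero | 1 => PSucc | 2 => PId | 3 => PFst | 4 => PSnd
  | 5 => PComp (code (p1 (c/9))) (code (p2 (c/9)))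
  | 6 => PPair (code (p1 (c/9))) (code (p2 (c/9)))
  | 7 => PPrec (code (p1 (c/9))) (code (p2 (c/9)))
  | _ => PMu (code (c/9)) end.
Proof.
  destruct c as [|k]. reflexivity.
  unfold code. cbn [dec]. pose proof (div9_le_pred (S k) k (le_n _)).
  pose proof (p1_le (S k/9)). pose proof (p2_le (S k/9)).
  destruct (S k mod 9) as [|[|[|[|[|[|[|[|[|]]]]]]]]]; try reflexivity;
  f_equal; apply dec_fuel_irrelevant; lia.
Qed.

Lemma code_inv c p : code c = p -> match p with
  | PZero => c mod 9 = 0 | PSucc => c mod 9 = 1 | PId => c mod 9 = 2 | PFst => c mod 9 = 3
  | PSnd => c mod 9 = 4
  | PComp f g => c mod 9 = 5 /\ f = code (p1 (c/9)) /\ g = code (p2 (c/9))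
  | PPair f g => c mod 9 = 6 /\ f = code (p1 (c/9)) /\ g = code (p2 (c/9))
  | PPrec f g => c mod 9 = 7 /\ f = code (p1 (c/9)) /\ g = code (p2 (c/9))
  | PMu f => c mod 9 = 8 /\ f = code (c/9) end.
Proof.
  intro H. rewrite code_unfold in H. pose proof (Nat.mod_upper_bound c 9 ltac:(lia)).
  destruct (c mod 9) as [|[|[|[|[|[|[|[|[|]]]]]]]]]; subst; auto; lia.
Qed.

Lemma code_args_lt c : 5 <= c mod 9 -> c / 9 < c /\ p1 (c/9) < c /\ p2 (c/9) < c.
Proof.
  intros H. assert (c <> 0) by (intro; subst; simpl in H; lia).
  assert (c / 9 < c) by (apply Nat.div_lt; lia).
  pose proof (p1_le (c/9)). pose proof (p2_le (c/9)). lia.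
Qed.

Definition idx_comp a b := 9 * pr a b + 5.
Definition idx_pair a b := 9 * pr a b + 6.
Definition idx_prec a b := 9 * pr a b + 7.
Definition idx_mu a := 9 * a + 8.

Lemma mod9_affine m r : r < 9 -> (9 * m + r) mod 9 = r.
Proof. intro. symmetry. apply (Nat.mod_unique _ _ m); lia. Qed.

Lemma div9_affine m r : r < 9 -> (9 * m + r) / 9 = m.
Proof. intro. symmetry. apply (Nat.div_unique _ _ _ r); lia. Qed.

Lemma code_idx_comp a b : code (idx_comp a b) = PComp (code a) (code b).
Proof. rewrite code_unfold. unfold idx_comp. rewrite mod9_affine, div9_affine, p1_pr, p2_pr by lia. reflexivity. Qed.

Lemma code_idx_pair a b : code (idx_pair a b) = PPair (code a) (code b).
Proof. rewrite code_unfold. unfold idx_pair. rewrite mod9_affine, div9_affine, p1_pr, p2_pr by lia. reflexivity. Qed.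

Lemma code_idx_prec a b : code (idx_prec a b) = PPrec (code a) (code b).
Proof. rewrite code_unfold. unfold idx_prec. rewrite mod9_affine, div9_affine, p1_pr, p2_pr by lia. reflexivity. Qed.

Lemma code_idx_mu a : code (idx_mu a) = PMu (code a).
Proof. rewrite code_unfold. unfold idx_mu. rewrite mod9_affine, div9_affine by lia. reflexivity. Qed.

Lemma idx_comp_inj a b a' b' : idx_comp a b = idx_comp a' b' -> a = a' /\ b = b'.
Proof. unfold idx_comp. intro H. apply pr_inj. lia. Qed.

Lemma idx_pair_inj a b a' b' : idx_pair a b = idx_pair a' b' -> a = a' /\ b = b'.
Proof. unfold idx_pair. intro H. apply pr_inj. lia. Qed.

Lemma code_surj p : exists c, code c = p.
Proof.
  induction p.
  - exists 0; reflexivity.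
  - exists 1; reflexivity.
  - exists 2; reflexivity.
  - exists 3; reflexivity.
  - exists 4; reflexivity.
  - destruct IHp1 as [a <-], IHp2 as [b <-]. exists (idx_comp a b). apply code_idx_comp.
  - destruct IHp1 as [a <-], IHp2 as [b <-]. exists (idx_pair a b). apply code_idx_pair.
  - destruct IHp1 as [a <-], IHp2 as [b <-]. exists (idx_prec a b). apply code_idx_prec.
  - destruct IHp as [a <-]. exists (idx_mu a). apply code_idx_mu.
Qed.

(** * Total programs *)

(* A program packaged with the total function it computes.  [tExt] replaces the
   function by an extensionally equal one, so that [tfun] of a composite program
   reduces to the intended closed expression. *)
Record tprog := { prog : prf; tfun : nat -> nat; tfun_spec : forall n, eval prog n (tfun n) }.

Definition tZero : tprog := {| prog := PZero; tfun := fun _ => 0; tfun_spec := ev_zero |}.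
Definition tSucc : tprog := {| prog := PSucc; tfun := S; tfun_spec := ev_succ |}.
Definition tId : tprog := {| prog := PId; tfun := fun n => n; tfun_spec := ev_id |}.
Definition tFst : tprog := {| prog := PFst; tfun := p1; tfun_spec := ev_fst |}.
Definition tSnd : tprog := {| prog := PSnd; tfun := p2; tfun_spec := ev_snd |}.

Definition tComp (F G : tprog) : tprog.
Proof.
  refine {| prog := PComp (prog F) (prog G); tfun := fun n => tfun F (tfun G n) |}.
  intro n. eapply ev_comp; apply tfun_spec.
Defined.

Definition tPair (F G : tprog) : tprog.
Proof.
  refine {| prog := PPair (prog F) (prog G); tfun := fun n => pr (tfun F n) (tfun G n) |}.
  intro n. eapply ev_pair; apply tfun_spec.
Defined.

Fixpoint prec_fun (f g : nat -> nat) (a m : nat) : nat :=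
  match m with 0 => f a | S k => g (pr a (pr k (prec_fun f g a k))) end.

Definition tPrec (F G : tprog) : tprog.
Proof.
  refine {| prog := PPrec (prog F) (prog G);
            tfun := fun n => prec_fun (tfun F) (tfun G) (p1 n) (p2 n) |}.
  intro n. rewrite <- (pr_p1p2 n) at 1. generalize (p1 n) (p2 n). intros a m.
  induction m; simpl.
  - apply ev_prec0, tfun_spec.
  - eapply ev_precS; [apply IHm | apply tfun_spec].
Defined.

Definition tExt (F : tprog) (g : nat -> nat) (H : forall n, tfun F n = g n) : tprog.
Proof. refine {| prog := prog F; tfun := g |}. intro n. rewrite <- H. apply tfun_spec. Defined.

Lemma tfun_spec_eq (F : tprog) n v : tfun F n = v -> eval (prog F) n v.
Proof. intros <-. apply tfun_spec. Qed.

Fixpoint tNumeral (c : nat) : tprog :=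
  match c with 0 => tZero | S k => tComp tSucc (tNumeral k) end.

Lemma tNumeral_val k n : tfun (tNumeral k) n = k.
Proof. induction k; simpl; auto. Qed.

Definition tConst (c : nat) : tprog := tExt (tNumeral c) (fun _ => c) (tNumeral_val c).

Definition tLift2 (B : tprog) (op : nat -> nat -> nat)
  (HB : forall a b, tfun B (pr a b) = op a b) (F G : tprog) : tprog.
Proof.
  refine (tExt (tComp B (tPair F G)) (fun n => op (tfun F n) (tfun G n)) _).
  intro n. simpl. apply HB.
Defined.

(* Projections out of the argument [pr a (pr m v)] of the step function of [tPrec]. *)
Definition step_arg := tFst.
Definition step_idx := tComp tFst tSnd.
Definition step_val := tComp tSnd tSnd.

Definition tAddP : tprog.
Proof.
  refine (tExt (tPrec tId (tComp tSucc step_val)) (fun n => p1 n + p2 n) _).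
  intro n. simpl. generalize (p1 n) (p2 n). intros a m.
  induction m; simpl; auto. rewrite !p2_pr, IHm. lia.
Defined.

Definition tAdd := tLift2 tAddP Nat.add
  (fun a b => ltac:(simpl; rewrite p1_pr, p2_pr; reflexivity)).

Definition tMulP : tprog.
Proof.
  refine (tExt (tPrec tZero (tAdd step_val step_arg)) (fun n => p1 n * p2 n) _).
  intro n. simpl. generalize (p1 n) (p2 n). intros a m.
  induction m; simpl; auto. rewrite !p2_pr, !p1_pr, IHm. lia.
Defined.

Definition tMul := tLift2 tMulP Nat.mul
  (fun a b => ltac:(simpl; rewrite p1_pr, p2_pr; reflexivity)).

Definition tPred : tprog.
Proof.
  refine (tExt (tComp (tPrec tZero (tComp tFst tSnd)) (tPair tZero tId)) Nat.pred _).
  intro n. simpl. rewrite p2_pr. destruct n; simpl; rewrite ?p2_pr, ?p1_pr; auto.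
Defined.

Definition tSubP : tprog.
Proof.
  refine (tExt (tPrec tId (tComp tPred step_val)) (fun n => p1 n - p2 n) _).
  intro n. simpl. generalize (p1 n) (p2 n). intros a m.
  induction m; simpl; [lia|]. rewrite !p2_pr, IHm. lia.
Defined.

Definition tSub := tLift2 tSubP Nat.sub
  (fun a b => ltac:(simpl; rewrite p1_pr, p2_pr; reflexivity)).

(* Truth values: [0] is false, anything else is true. *)
Definition nonzero (k : nat) : bool := negb (k =? 0).

Lemma nonzero_b2n b : nonzero (Nat.b2n b) = b.
Proof. destruct b; reflexivity. Qed.

Definition tIteP : tprog.
Proof.
  refine (tExt (tComp (tPrec tSnd (tComp tFst tFst)) (tPair tSnd tFst))
    (fun n => if nonzero (p1 n) then p1 (p2 n) else p2 (p2 n)) _).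
  intro n. simpl. rewrite p1_pr, p2_pr. destruct (p1 n); simpl; rewrite ?p1_pr; auto.
Defined.

Definition tIf (C X Y : tprog) : tprog.
Proof.
  refine (tExt (tComp tIteP (tPair C (tPair X Y)))
    (fun n => if nonzero (tfun C n) then tfun X n else tfun Y n) _).
  intro n. simpl. rewrite !p1_pr, !p2_pr.
  destruct (nonzero (tfun C n)); rewrite ?p1_pr, ?p2_pr; reflexivity.
Defined.

Definition tNot (F : tprog) : tprog.
Proof.
  refine (tExt (tIf F (tConst 0) (tConst 1)) (fun n => Nat.b2n (negb (nonzero (tfun F n)))) _).
  intro n. simpl. destruct (nonzero (tfun F n)); reflexivity.
Defined.

Definition tAnd (F G : tprog) : tprog.
Proof.
  refine (tExt (tIf F (tIf G (tConst 1) (tConst 0)) (tConst 0))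
    (fun n => Nat.b2n (nonzero (tfun F n) && nonzero (tfun G n))) _).
  intro n. simpl. destruct (nonzero (tfun F n)), (nonzero (tfun G n)); reflexivity.
Defined.

Definition tOr (F G : tprog) : tprog.
Proof.
  refine (tExt (tIf F (tConst 1) (tIf G (tConst 1) (tConst 0)))
    (fun n => Nat.b2n (nonzero (tfun F n) || nonzero (tfun G n))) _).
  intro n. simpl. destruct (nonzero (tfun F n)), (nonzero (tfun G n)); reflexivity.
Defined.

Definition tEq (F G : tprog) : tprog.
Proof.
  refine (tExt (tNot (tAdd (tSub F G) (tSub G F))) (fun n => Nat.b2n (tfun F n =? tfun G n)) _).
  intro n. simpl. unfold nonzero. f_equal.
  destruct (Nat.eqb_spec (tfun F n) (tfun G n));
  destruct (Nat.eqb_spec (tfun F n - tfun G n + (tfun G n - tfun F n)) 0); simpl; auto; lia.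
Defined.

Definition tLt (F G : tprog) : tprog.
Proof.
  refine (tExt (tNot (tNot (tSub G F))) (fun n => Nat.b2n (tfun F n <? tfun G n)) _).
  intro n. simpl. unfold nonzero. f_equal.
  destruct (Nat.ltb_spec (tfun F n) (tfun G n));
  destruct (Nat.eqb_spec (tfun G n - tfun F n) 0); simpl; auto; lia.
Defined.

Fixpoint bexists (f : nat -> bool) (m : nat) : bool :=
  match m with 0 => false | S k => bexists f k || f k end.

Fixpoint bforall (f : nat -> bool) (m : nat) : bool :=
  match m with 0 => true | S k => bforall f k && f k end.

#[export] Instance bexists_proper : Proper (pointwise_relation nat eq ==> eq ==> eq) bexists.
Proof. intros f g H m m' <-. induction m; simpl; auto. rewrite IHm, H. auto. Qed.

#[export] Instance bforall_proper : Proper (pointwise_relation nat eq ==> eq ==> eq) bforall.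
Proof. intros f g H m m' <-. induction m; simpl; auto. rewrite IHm, H. auto. Qed.

Lemma bexists_spec f m : bexists f m = true <-> exists i, i < m /\ f i = true.
Proof.
  induction m; simpl.
  - split; [discriminate | intros [i [Hi _]]; lia].
  - rewrite Bool.orb_true_iff, IHm. split.
    + intros [[i [Hi H]]|H]; exists i || exists m; split; auto; lia.
    + intros [i [Hi H]]. destruct (Nat.eq_dec i m); [subst; auto|].
      left; exists i; split; auto; lia.
Qed.

Lemma bexists_unbounded f m :
  (forall i, f i = true -> i < m) -> (bexists f m = true <-> exists i, f i = true).
Proof.
  intro H. rewrite bexists_spec. split; [intros [i [_ Hi]] | intros [i Hi]]; eauto.
Qed.

Lemma bforall_spec f m : bforall f m = true <-> forall i, i < m -> f i = true.
Proof.
  induction m; simpl.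
  - split; auto; intros; lia.
  - rewrite Bool.andb_true_iff, IHm. split.
    + intros [H1 H2] i Hi. destruct (Nat.eq_dec i m); [subst; auto | apply H1; lia].
    + intros H; split; auto.
Qed.

(* [tBexists P] and [tBforall P] take [pr a m] and quantify over [i < m] in [P (pr a i)]. *)
Definition tBexists (P : tprog) : tprog.
Proof.
  refine (tExt (tPrec tZero (tOr step_val (tComp P (tPair step_arg step_idx))))
    (fun n => Nat.b2n (bexists (fun i => nonzero (tfun P (pr (p1 n) i))) (p2 n))) _).
  intro n. simpl. generalize (p1 n) (p2 n). intros a m.
  induction m; simpl; auto. rewrite !p2_pr, !p1_pr, IHm, nonzero_b2n. reflexivity.
Defined.

Definition tBforall (P : tprog) : tprog.
Proof.
  refine (tExt (tPrec (tConst 1) (tAnd step_val (tComp P (tPair step_arg step_idx))))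
    (fun n => Nat.b2n (bforall (fun i => nonzero (tfun P (pr (p1 n) i))) (p2 n))) _).
  intro n. simpl. generalize (p1 n) (p2 n). intros a m.
  induction m; simpl; auto. rewrite !p2_pr, !p1_pr, IHm, nonzero_b2n. reflexivity.
Defined.

Lemma divmod_succ d m : d <> 0 ->
  pr (S m / d) (S m mod d) =
  if S (m mod d) =? d then pr (S (m/d)) 0 else pr (m/d) (S (m mod d)).
Proof.
  intro Hd. pose proof (Nat.div_mod m d Hd). pose proof (Nat.mod_upper_bound m d Hd).
  destruct (Nat.eqb_spec (S (m mod d)) d); f_equal; symmetry.
  - apply (Nat.div_unique _ _ _ 0); lia.
  - apply (Nat.mod_unique _ _ (S (m/d))); lia.
  - apply (Nat.div_unique _ _ _ (S (m mod d))); lia.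
  - apply (Nat.mod_unique _ _ (m/d)); lia.
Qed.

Definition tDivMod : tprog :=
  tPrec (tConst (pr 0 0))
    (tIf (tEq (tComp tSucc (tComp tSnd step_val)) step_arg)
         (tPair (tComp tSucc (tComp tFst step_val)) (tConst 0))
         (tPair (tComp tFst step_val) (tComp tSucc (tComp tSnd step_val)))).

Lemma tDivMod_spec d a : d <> 0 -> tfun tDivMod (pr d a) = pr (a / d) (a mod d).
Proof.
  intro Hd. simpl. rewrite p1_pr, p2_pr. induction a.
  - simpl. rewrite Nat.Div0.div_0_l, Nat.Div0.mod_0_l. reflexivity.
  - simpl. rewrite IHa. repeat rewrite ?p1_pr, ?p2_pr.
    rewrite nonzero_b2n, divmod_succ by auto. destruct d; [lia | reflexivity].
Qed.

Definition tPow2 : tprog.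
Proof.
  refine (tExt (tComp (tPrec (tConst 1) (tAdd step_val step_val)) (tPair tZero tId))
    (fun n => 2 ^ n) _).
  intro n. simpl. rewrite p1_pr, p2_pr. induction n; simpl; auto. rewrite !p2_pr, IHn. lia.
Defined.

Definition tDiv9 : tprog.
Proof.
  refine (tExt (tComp tFst (tComp tDivMod (tPair (tConst 9) tId))) (fun n => n / 9) _).
  intro n. cbn [tfun tComp tPair tConst tExt tFst tId].
  rewrite tDivMod_spec, p1_pr by lia. reflexivity.
Defined.

Definition tMod9 : tprog.
Proof.
  refine (tExt (tComp tSnd (tComp tDivMod (tPair (tConst 9) tId))) (fun n => n mod 9) _).
  intro n. cbn [tfun tComp tPair tConst tExt tSnd tId].
  rewrite tDivMod_spec, p2_pr by lia. reflexivity.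
Defined.

Definition tTestbit : tprog.
Proof.
  refine (tExt (tComp tSnd (tComp tDivMod (tPair (tConst 2)
      (tComp tFst (tComp tDivMod (tPair (tComp tPow2 tSnd) tFst))))))
    (fun n => Nat.b2n (Nat.testbit (p1 n) (p2 n))) _).
  intro n. cbn [tfun tComp tPair tConst tExt tFst tSnd tId].
  rewrite (tDivMod_spec (2 ^ p2 n)) by (apply Nat.pow_nonzero; lia).
  rewrite p1_pr, tDivMod_spec, p2_pr by lia.
  rewrite Nat.testbit_spec'. reflexivity.
Defined.

(** * Unbounded search *)

Lemma eval_mu_tprog (F : tprog) x n : eval (PMu (prog F)) x n <->
  tfun F (pr x n) = 0 /\ forall m, m < n -> tfun F (pr x m) <> 0.
Proof.
  split.
  - intro H. apply eval_mu_inv in H as [H1 H2]. split.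
    + symmetry. eapply eval_functional; [exact H1 | apply tfun_spec].
    + intros m Hm E. destruct (H2 m Hm) as [w [Hw Hev]]. apply Hw.
      rewrite (eval_functional _ _ _ Hev _ (tfun_spec F _)). auto.
  - intros [H1 H2]. apply ev_mu.
    + rewrite <- H1. apply tfun_spec.
    + intros m Hm. exists (tfun F (pr x m)). split; auto. apply tfun_spec.
Qed.

Lemma least_zero (f : nat -> nat) N :
  f N = 0 -> exists n, f n = 0 /\ forall m, m < n -> f m <> 0.
Proof.
  induction N as [N IH] using (well_founded_induction lt_wf). intro H.
  destruct (bexists (fun i => f i =? 0) N) eqn:E.
  - apply bexists_spec in E as [i [Hi Ei]]. apply Nat.eqb_eq in Ei. eauto.
  - exists N. split; auto. intros m Hm Em.
    assert (bexists (fun i => f i =? 0) N = true) by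
      (apply bexists_spec; exists m; split; auto; apply Nat.eqb_eq; auto).
    congruence.
Qed.

Lemma mu_defined_iff (F : tprog) x :
  (exists n, eval (PMu (prog F)) x n) <-> exists n, tfun F (pr x n) = 0.
Proof.
  split.
  - intros [n H]. apply eval_mu_tprog in H as [H _]. eauto.
  - intros [N H]. destruct (least_zero (fun n => tfun F (pr x n)) N H) as [n Hn].
    exists n. apply eval_mu_tprog. auto.
Qed.

(** * A universal program *)

Definition triple c x v := pr c (pr x v).

Lemma triple_ge c x v : c <= triple c x v /\ x <= triple c x v /\ v <= triple c x v.
Proof. unfold triple. pose proof (pr_ge c (pr x v)). pose proof (pr_ge x v). lia. Qed.

Lemma canon_fin_lt Z t : canon_fin Z t -> t < Z.
Proof.
  unfold canon_fin. intro H. destruct (Nat.lt_ge_cases t Z) as [|HZ]; auto.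
  rewrite Nat.testbit_eqb, Nat.div_small in H; [discriminate|].
  pose proof (Nat.pow_gt_lin_r 2 t ltac:(lia)). lia.
Qed.

Lemma canon_fin_triple_lt Z c x v : canon_fin Z (triple c x v) -> c < Z /\ x < Z /\ v < Z.
Proof. intro H. apply canon_fin_lt in H. pose proof (triple_ge c x v). lia. Qed.

Lemma canon_fin_lor Z1 Z2 t : canon_fin (Nat.lor Z1 Z2) t <-> canon_fin Z1 t \/ canon_fin Z2 t.
Proof. unfold canon_fin. rewrite Nat.lor_spec. apply Bool.orb_true_iff. Qed.

Lemma canon_fin_pow2 t i : canon_fin (2 ^ t) i <-> i = t.
Proof. unfold canon_fin. rewrite Nat.pow2_bits_eqb, Nat.eqb_eq. intuition. Qed.

(* Read [Z] as the finite set of triples [triple c x v] asserting [eval (code c) x v];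
   [step_ok Z t] says that [t] follows from triples in [Z] by one rule of [eval]. *)
Definition step_ok (Z t : nat) : Prop :=
  let c := p1 t in let x := p1 (p2 t) in let v := p2 (p2 t) in let m := c / 9 in
  match c mod 9 with
  | 0 => v = 0 | 1 => v = S x | 2 => v = x | 3 => v = p1 x | 4 => v = p2 x
  | 5 => exists y, canon_fin Z (triple (p2 m) x y) /\ canon_fin Z (triple (p1 m) y v)
  | 6 => canon_fin Z (triple (p1 m) x (p1 v)) /\ canon_fin Z (triple (p2 m) x (p2 v))
  | 7 => match p2 x with
         | 0 => canon_fin Z (triple (p1 m) (p1 x) v)
         | S n => exists w, canon_fin Z (triple c (pr (p1 x) n) w) /\
                            canon_fin Z (triple (p2 m) (pr (p1 x) (pr n w)) v)
         end
  | _ => canon_fin Z (triple m (pr x v) 0) /\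
         forall j, j < v -> exists w, w <> 0 /\ canon_fin Z (triple m (pr x j) w)
  end.

Definition certificate Z := forall t, canon_fin Z t -> step_ok Z t.

Lemma step_ok_mono Z Z' t :
  (forall i, canon_fin Z i -> canon_fin Z' i) -> step_ok Z t -> step_ok Z' t.
Proof.
  intros HS. unfold step_ok. cbv zeta.
  destruct (p1 t mod 9) as [|[|[|[|[|[|[|[|[|]]]]]]]]]; auto.
  4,5: intros [H1 H2]; split; auto; intros j Hj; destruct (H2 j Hj) as [w [? ?]]; eauto.
  - intros [y [H1 H2]]; eauto.
  - intros [H1 H2]; eauto.
  - destruct (p2 (p1 (p2 t))); auto. intros [w [H1 H2]]; eauto.
Qed.

Lemma certificate_0 : certificate 0.
Proof. intros t H. unfold canon_fin in H. rewrite Nat.bits_0 in H. discriminate. Qed.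

Lemma certificate_lor Z1 Z2 : certificate Z1 -> certificate Z2 -> certificate (Nat.lor Z1 Z2).
Proof.
  intros H1 H2 t Ht.
  apply canon_fin_lor in Ht as [Ht|Ht]; [apply (step_ok_mono Z1) | apply (step_ok_mono Z2)];
    auto; intros; apply canon_fin_lor; auto.
Qed.

Lemma certificate_extend Z t :
  certificate Z -> step_ok Z t -> exists Z', certificate Z' /\ canon_fin Z' t.
Proof.
  intros HZ Ht. exists (Nat.lor Z (2 ^ t)).
  assert (Hsub : forall j, canon_fin Z j -> canon_fin (Nat.lor Z (2 ^ t)) j)
    by (intros; apply canon_fin_lor; auto).
  split.
  - intros i Hi. apply canon_fin_lor in Hi as [Hi|Hi].
    + apply (step_ok_mono Z); auto.
    + apply canon_fin_pow2 in Hi. subst. apply (step_ok_mono Z); auto.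
  - apply canon_fin_lor. right. apply canon_fin_pow2. auto.
Qed.

Lemma certificate_union (Q : nat -> nat -> Prop) :
  (forall m Z Z', Q m Z -> (forall i, canon_fin Z i -> canon_fin Z' i) -> Q m Z') ->
  forall n, (forall m, m < n -> exists Z, certificate Z /\ Q m Z) ->
  exists Z, certificate Z /\ forall m, m < n -> Q m Z.
Proof.
  intros HQ n. induction n; intros H.
  - exists 0. split; [apply certificate_0 | intros; lia].
  - destruct IHn as [Z1 [J1 H1]]; [intros; apply H; lia|].
    destruct (H n ltac:(lia)) as [Z2 [J2 H2]].
    exists (Nat.lor Z1 Z2). split; [apply certificate_lor; auto|].
    intros m Hm. destruct (Nat.eq_dec m n).
    + subst. apply (HQ _ Z2); auto. intros; apply canon_fin_lor; auto.
    + apply (HQ _ Z1); [apply H1; lia|]. intros; apply canon_fin_lor; auto.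
Qed.

Lemma certificate_sound Z :
  certificate Z -> forall c x v, canon_fin Z (triple c x v) -> eval (code c) x v.
Proof.
  intro HZ. intro c. induction c as [c IHc] using (well_founded_induction lt_wf).
  intro x. induction x as [x IHx] using (well_founded_induction lt_wf).
  intros v Hm. pose proof (HZ _ Hm) as Hj. unfold step_ok, triple in Hj. cbv zeta in Hj.
  repeat rewrite ?p1_pr, ?p2_pr in Hj.
  rewrite code_unfold. destruct (c mod 9) as [|[|[|[|[|[|[|[|[|]]]]]]]]] eqn:E; subst.
  1-5: constructor.
  all: pose proof (code_args_lt c ltac:(lia)).
  4,5: destruct Hj as [H1 H2]; apply ev_mu; [eapply IHc; eauto; lia|];
    intros j Hj; destruct (H2 j Hj) as [w [Hw Hm']]; exists w; split; auto;
    eapply IHc; eauto; lia.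
  - destruct Hj as [y [H1 H2]]. eapply ev_comp; eapply IHc; eauto; lia.
  - destruct Hj as [H1 H2]. rewrite <- (pr_p1p2 v). eapply ev_pair; eapply IHc; eauto; lia.
  - rewrite <- (pr_p1p2 x) in *. rewrite !p1_pr, !p2_pr in Hj. destruct (p2 x) as [|n].
    + apply ev_prec0. eapply IHc; eauto; lia.
    + destruct Hj as [w [H1 H2]]. eapply ev_precS.
      * assert (Hx : eval (code c) (pr (p1 x) n) w) by (apply IHx; auto; apply pr_lt_S).
        rewrite code_unfold, E in Hx. exact Hx.
      * eapply IHc; eauto; lia.
Qed.

Ltac step_ok_unfold := unfold step_ok, triple; cbv zeta; repeat rewrite ?p1_pr, ?p2_pr.

Lemma certificate_complete p x v :
  eval p x v -> forall c, code c = p -> exists Z, certificate Z /\ canon_fin Z (triple c x v).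
Proof.
  intro H. induction H using eval_ind_strong; intros c Hc; apply code_inv in Hc.
  1-5: apply (certificate_extend 0); [apply certificate_0|]; step_ok_unfold; rewrite Hc; reflexivity.
  - destruct Hc as [E [-> ->]].
    destruct (IHeval1 _ eq_refl) as [Z1 [J1 M1]], (IHeval2 _ eq_refl) as [Z2 [J2 M2]].
    apply (certificate_extend (Nat.lor Z1 Z2)); [apply certificate_lor; auto|].
    step_ok_unfold. rewrite E. exists y. split; apply canon_fin_lor; auto.
  - destruct Hc as [E [-> ->]].
    destruct (IHeval1 _ eq_refl) as [Z1 [J1 M1]], (IHeval2 _ eq_refl) as [Z2 [J2 M2]].
    apply (certificate_extend (Nat.lor Z1 Z2)); [apply certificate_lor; auto|].
    step_ok_unfold. rewrite E. split; apply canon_fin_lor; auto.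
  - destruct Hc as [E [-> ->]].
    destruct (IHeval _ eq_refl) as [Z1 [J1 M1]].
    apply (certificate_extend Z1); auto.
    step_ok_unfold. rewrite E. auto.
  - destruct Hc as [E [-> ->]].
    destruct (IHeval1 c) as [Z1 [J1 M1]]; [rewrite code_unfold, E; auto|].
    destruct (IHeval2 _ eq_refl) as [Z2 [J2 M2]].
    apply (certificate_extend (Nat.lor Z1 Z2)); [apply certificate_lor; auto|].
    step_ok_unfold. rewrite E. exists v. split; apply canon_fin_lor; auto.
  - destruct Hc as [E ->].
    destruct (IHeval _ eq_refl) as [Z1 [J1 M1]].
    destruct (certificate_union
      (fun m Z => exists w, w <> 0 /\ canon_fin Z (triple (c/9) (pr x m) w))) with (n := n)
      as [Z2 [J2 M2]].
    + intros m Z Z' [w [Hw Hm]] HZ. eauto.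
    + intros m Hm. match goal with Hbelow : forall m, m < n -> exists v, _ |- _ =>
        destruct (Hbelow m Hm) as [w [Hw [_ IHw]]] end.
      destruct (IHw _ eq_refl) as [Z [J M]]. eauto.
    + apply (certificate_extend (Nat.lor Z1 Z2)); [apply certificate_lor; auto|].
      step_ok_unfold. rewrite E. split; [apply canon_fin_lor; auto|].
      intros j Hj. destruct (M2 j Hj) as [w [Hw Hm]].
      exists w. split; auto. apply canon_fin_lor; auto.
Qed.

(* Accessors for [tStepOk], whose input is [pr Z (triple c x v)]; applied to [tFst]
   they read that input from inside a bounded quantifier. *)
Definition in_set E := tComp tFst E.
Definition in_triple E := tComp tSnd E.
Definition in_idx E := tComp tFst (in_triple E).
Definition in_arg E := tComp tFst (tComp tSnd (in_triple E)).
Definition in_val E := tComp tSnd (tComp tSnd (in_triple E)).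
Definition in_sub E := tComp tDiv9 (in_idx E).
Definition in_rule E := tComp tMod9 (in_idx E).
Definition in_outer := tComp tFst tFst.

Definition tMemTriple Zf Cf Xf Vf := tComp tTestbit (tPair Zf (tPair Cf (tPair Xf Vf))).

Definition step_comp E :=
  tComp (tBexists
    (tAnd (tMemTriple (in_set tFst) (tComp tSnd (in_sub tFst)) (in_arg tFst) tSnd)
          (tMemTriple (in_set tFst) (tComp tFst (in_sub tFst)) tSnd (in_val tFst))))
    (tPair E (in_set E)).

Definition step_pair E :=
  tAnd (tMemTriple (in_set E) (tComp tFst (in_sub E)) (in_arg E) (tComp tFst (in_val E)))
       (tMemTriple (in_set E) (tComp tSnd (in_sub E)) (in_arg E) (tComp tSnd (in_val E))).

Definition step_prec E :=
  tIf (tComp tSnd (in_arg E))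
    (tComp (tBexists
       (tAnd (tMemTriple (in_set tFst) (in_idx tFst)
                (tPair (tComp tFst (in_arg tFst)) (tComp tPred (tComp tSnd (in_arg tFst)))) tSnd)
             (tMemTriple (in_set tFst) (tComp tSnd (in_sub tFst))
                (tPair (tComp tFst (in_arg tFst))
                       (tPair (tComp tPred (tComp tSnd (in_arg tFst))) tSnd))
                (in_val tFst))))
       (tPair E (in_set E)))
    (tMemTriple (in_set E) (tComp tFst (in_sub E)) (tComp tFst (in_arg E)) (in_val E)).

Definition step_mu E :=
  tAnd (tMemTriple (in_set E) (in_sub E) (tPair (in_arg E) (in_val E)) (tConst 0))
       (tComp (tBforall (tComp (tBexists
            (tAnd (tNot (tEq tSnd (tConst 0)))
                  (tMemTriple (in_set in_outer) (in_sub in_outer)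
                     (tPair (in_arg in_outer) (tComp tSnd tFst)) tSnd)))
          (tPair tId (in_set tFst))))
        (tPair E (in_val E))).

Definition tStepOk :=
  let E := tId in
  tIf (tEq (in_rule E) (tConst 0)) (tEq (in_val E) (tConst 0))
 (tIf (tEq (in_rule E) (tConst 1)) (tEq (in_val E) (tComp tSucc (in_arg E)))
 (tIf (tEq (in_rule E) (tConst 2)) (tEq (in_val E) (in_arg E))
 (tIf (tEq (in_rule E) (tConst 3)) (tEq (in_val E) (tComp tFst (in_arg E)))
 (tIf (tEq (in_rule E) (tConst 4)) (tEq (in_val E) (tComp tSnd (in_arg E)))
 (tIf (tEq (in_rule E) (tConst 5)) (step_comp E)
 (tIf (tEq (in_rule E) (tConst 6)) (step_pair E)
 (tIf (tEq (in_rule E) (tConst 7)) (step_prec E) (step_mu E)))))))).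

Ltac tsimpl := cbn [tfun tIf tAnd tOr tNot tEq tLt tComp tPair tFst tSnd tId tConst tExt
  tBexists tBforall tTestbit tDiv9 tMod9 tPred in_set in_triple in_idx in_arg in_val in_sub
  in_rule tMemTriple step_comp step_pair step_prec step_mu in_outer tStepOk tLift2 tSucc].

(* Every triple of [Z] is below [Z], so searching for witnesses below [Z] suffices. *)
Lemma tStepOk_spec Z t : nonzero (tfun tStepOk (pr Z t)) = true <-> step_ok Z t.
Proof.
  tsimpl. repeat rewrite ?p1_pr, ?p2_pr. unfold step_ok. cbv zeta.
  destruct (p1 t mod 9) as [|[|[|[|[|[|[|[|[|]]]]]]]]]; cbn -[Nat.modulo Nat.div];
    repeat setoid_rewrite nonzero_b2n; repeat setoid_rewrite p1_pr; repeat setoid_rewrite p2_pr.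
  all: unfold canon_fin, triple.
  1-5: apply Nat.eqb_eq.
  4,5: rewrite Bool.andb_true_iff, bforall_spec; apply and_iff_compat_l;
    split; intros H j Hj; specialize (H j Hj);
    [ apply bexists_spec in H as [w [_ Hw]]; apply Bool.andb_true_iff in Hw as [Hw1 Hw2];
      exists w; split; auto; apply Bool.negb_true_iff, Nat.eqb_neq in Hw1; auto
    | destruct H as [w [Hw1 Hw2]]; apply bexists_spec; exists w; split;
      [ apply canon_fin_triple_lt in Hw2; lia
      | apply Bool.andb_true_iff; split; auto; apply Bool.negb_true_iff, Nat.eqb_neq; auto ] ].
  - rewrite bexists_unbounded; [setoid_rewrite Bool.andb_true_iff; reflexivity|].
    intros i Hi. apply Bool.andb_true_iff in Hi as [H1 _]. apply canon_fin_triple_lt in H1. lia.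
  - apply Bool.andb_true_iff.
  - destruct (p2 (p1 (p2 t))) as [|n]; simpl; rewrite nonzero_b2n; [reflexivity|].
    rewrite bexists_unbounded; [setoid_rewrite Bool.andb_true_iff; reflexivity|].
    intros i Hi. apply Bool.andb_true_iff in Hi as [H1 _]. apply canon_fin_triple_lt in H1. lia.
Qed.

(* On input [pr (pr c x) Z]: is [Z] a certificate containing a triple [triple c x v]? *)
Definition tCertCheck : tprog :=
  tAnd (tComp (tBexists (tMemTriple (tComp tSnd tFst) (tComp tFst (tComp tFst tFst))
                                    (tComp tSnd (tComp tFst tFst)) tSnd))
              (tPair tId tSnd))
       (tComp (tBforall (tOr (tNot (tComp tTestbit (tPair (tComp tSnd tFst) tSnd)))
                             (tComp tStepOk (tPair (tComp tSnd tFst) tSnd))))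
              (tPair tId tSnd)).

Lemma tCertCheck_spec c x Z : nonzero (tfun tCertCheck (pr (pr c x) Z)) = true <->
  (exists v, canon_fin Z (triple c x v)) /\ certificate Z.
Proof.
  unfold tCertCheck.
  cbn [tfun tAnd tOr tNot tComp tPair tFst tSnd tId tBexists tBforall tExt tTestbit tMemTriple].
  repeat setoid_rewrite p1_pr. repeat setoid_rewrite p2_pr. repeat setoid_rewrite nonzero_b2n.
  rewrite Bool.andb_true_iff, bexists_unbounded, bforall_spec.
  2:{ intros i Hi. apply canon_fin_triple_lt in Hi. lia. }
  apply and_iff_compat_l. unfold certificate. split.
  - intros H t Ht. rewrite <- tStepOk_spec.
    specialize (H t (canon_fin_lt _ _ Ht)). apply Bool.orb_true_iff in H as [H|H]; auto.
    unfold canon_fin in Ht. rewrite Ht in H. discriminate.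
  - intros H t _. apply Bool.orb_true_iff.
    destruct (Nat.testbit Z t) eqn:E; [right | left; reflexivity].
    apply tStepOk_spec, H. exact E.
Qed.

(* Search for a certificate of some computation of program [c] on [x]. *)
Definition universal := PMu (prog (tNot tCertCheck)).

Lemma universal_spec c x : (exists v, eval universal (pr c x) v) <-> W c x.
Proof.
  unfold universal. rewrite mu_defined_iff.
  assert (Hnot : forall n, tfun (tNot tCertCheck) n = 0 <-> nonzero (tfun tCertCheck n) = true)
    by (intro n; cbn [tfun tNot tExt]; destruct (nonzero _); simpl; intuition discriminate).
  setoid_rewrite Hnot. setoid_rewrite tCertCheck_spec. unfold W. split.
  - intros [Z [[v Hv] HZ]]. exists v. eapply certificate_sound; eauto.
  - intros [v Hv]. destruct (certificate_complete _ _ _ Hv c eq_refl) as [Z [HZ M]]. eauto.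
Qed.

(** * Computing indices *)

Lemma recursive_fun_comp g h : recursive_fun g -> recursive_fun h -> recursive_fun (fun n => g (h n)).
Proof. intros [f Hf] [k Hk]. exists (PComp f k). intro n. eapply ev_comp; eauto. Qed.

Definition tIdxComp (A B : tprog) : tprog.
Proof.
  refine (tExt (tAdd (tMul (tConst 9) (tPair A B)) (tConst 5))
    (fun n => idx_comp (tfun A n) (tfun B n)) _).
  reflexivity.
Defined.

Definition tIdxPair (A B : tprog) : tprog.
Proof.
  refine (tExt (tAdd (tMul (tConst 9) (tPair A B)) (tConst 6))
    (fun n => idx_pair (tfun A n) (tfun B n)) _).
  reflexivity.
Defined.

Fixpoint numeral_index (k : nat) : nat :=
  match k with 0 => 0 | S k' => idx_comp 1 (numeral_index k') end.

Lemma code_numeral_index k : code (numeral_index k) = prog (tNumeral k).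
Proof. induction k; simpl; [reflexivity|]. rewrite <- IHk. apply code_idx_comp. Qed.

Definition tNumeralIndex : tprog.
Proof.
  refine (tExt (tComp (tPrec tZero (tIdxComp (tConst 1) step_val)) (tPair tZero tId))
    numeral_index _).
  intro n. cbn [tfun tComp tPair tZero tId tExt tPrec]. rewrite p1_pr, p2_pr.
  induction n; [reflexivity|].
  cbn [prec_fun tfun tIdxComp tExt tConst step_val tComp tSnd] in *.
  rewrite !p2_pr, IHn. reflexivity.
Defined.

Definition zero_only := PMu PFst.

Lemma zero_only_eval y v : eval zero_only y v <-> y = 0 /\ v = 0.
Proof.
  unfold zero_only. rewrite (eval_mu_tprog tFst y v). cbn [tfun tFst]. setoid_rewrite p1_pr.
  split.
  - intros [H1 H2]. split; auto. destruct v; auto. exfalso. apply (H2 0); auto. lia.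
  - intros [-> ->]. split; auto. intros; lia.
Qed.

Definition tNeq := tNot (tEq tFst tSnd).

Definition singleton_prog k :=
  PComp zero_only (PComp (prog tNeq) (PPair PId (prog (tNumeral k)))).

Lemma singleton_prog_dom k n : (exists v, eval (singleton_prog k) n v) <-> n = k.
Proof.
  assert (Hneq : tfun tNeq (pr n k) = Nat.b2n (negb (n =? k))).
  { cbn [tfun tNeq tNot tEq tExt tFst tSnd]. rewrite p1_pr, p2_pr, nonzero_b2n. reflexivity. }
  split.
  - intros [v H]. apply eval_comp_inv in H as [y1 [H1 H2]].
    apply zero_only_eval in H2 as [-> ->].
    apply eval_comp_inv in H1 as [y2 [H3 H4]].
    apply eval_pair_inv in H3 as [a [b [-> [Ha Hb]]]].
    assert (a = n) by (inversion Ha; auto). subst a.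
    rewrite (eval_functional _ _ _ Hb _ (tfun_spec _ _)), tNumeral_val in H4.
    pose proof (eval_functional _ _ _ H4 _ (tfun_spec _ _)) as E. rewrite Hneq in E.
    destruct (Nat.eqb_spec n k); [auto | discriminate].
  - intros ->. exists 0. eapply ev_comp; [|apply zero_only_eval; auto].
    eapply ev_comp; [eapply ev_pair; [apply ev_id | apply tfun_spec]|].
    rewrite tNumeral_val. apply tfun_spec_eq.
    rewrite Hneq, Nat.eqb_refl. reflexivity.
Qed.

Lemma singleton_index : exists E : nat -> nat, recursive_fun E /\ forall k n, W (E k) n <-> n = k.
Proof.
  destruct (code_surj zero_only) as [g Hg]. destruct (code_surj (prog tNeq)) as [d Hd].
  exists (fun k => idx_comp g (idx_comp d (idx_pair 2 (numeral_index k)))). split.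
  - exists (prog (tIdxComp (tConst g) (tIdxComp (tConst d) (tIdxPair (tConst 2) tNumeralIndex)))).
    intro n. apply tfun_spec.
  - intros k n. unfold W.
    rewrite code_idx_comp, code_idx_comp, code_idx_pair, code_numeral_index, Hg, Hd.
    apply singleton_prog_dom.
Qed.

(** * From a 1-reduction of jumps to an enumeration reduction *)

Definition set_jump (A : nat -> Prop) : nat -> Prop := fun e => exists k, W e k /\ A k.

Definition tNotPow2 := tNot (tEq (tComp tPow2 tSnd) (tComp tSnd tFst)).

Lemma tNotPow2_val n b : tfun tNotPow2 (pr n b) = Nat.b2n (negb (2 ^ b =? p2 n)).
Proof.
  cbn [tfun tNotPow2 tNot tEq tExt tComp tPow2 tSnd tFst]. rewrite p1_pr, p2_pr, nonzero_b2n.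
  reflexivity.
Qed.

(* [2 ^ b] is the canonical index of the finite set [{b}]. *)
Lemma ce_W_pow2 (g : nat -> nat) :
  recursive_fun g -> ce (fun n => exists b, p2 n = 2 ^ b /\ W (g (p1 n)) b).
Proof.
  intros [f Hf].
  exists (PComp universal (PPair (PComp f PFst) (PMu (prog tNotPow2)))). intro n. split.
  - intros [b [Hb HW]]. apply universal_spec in HW as [v Hv]. exists v.
    eapply ev_comp; [|exact Hv]. apply ev_pair.
    + eapply ev_comp; [apply ev_fst | apply Hf].
    + apply eval_mu_tprog. rewrite tNotPow2_val, Hb, Nat.eqb_refl. split; [reflexivity|].
      intros m Hm. rewrite tNotPow2_val, Hb.
      destruct (Nat.eqb_spec (2 ^ m) (2 ^ b)) as [E|]; [|discriminate].
      apply Nat.pow_inj_r in E; lia.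
  - intros [v Hv]. apply eval_comp_inv in Hv as [y [H1 H2]].
    apply eval_pair_inv in H1 as [a [b [-> [Ha Hb]]]].
    apply eval_comp_inv in Ha as [z [Hz1 Hz2]]. inversion Hz1; subst.
    rewrite (eval_functional _ _ _ Hz2 _ (Hf _)) in H2.
    apply eval_mu_tprog in Hb as [Hb _]. rewrite tNotPow2_val in Hb.
    exists b. split.
    + destruct (Nat.eqb_spec (2 ^ b) (p2 n)); [auto | discriminate].
    + apply universal_spec. eauto.
Qed.

Lemma e_red_of_one_red_set_jump (A B : nat -> Prop) :
  one_red (set_jump A) (set_jump B) -> e_red A B.
Proof.
  intros [h [Hh [_ Hjump]]]. destruct singleton_index as [E [HE HWE]].
  exists (fun n => exists b, p2 n = 2 ^ b /\ W (h (E (p1 n))) b).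
  split; [apply (ce_W_pow2 (fun k => h (E k))), recursive_fun_comp; auto|].
  intro k. transitivity (set_jump A (E k)).
  { unfold set_jump. split.
    - intro; exists k; split; auto. apply HWE; auto.
    - intros [k' [H1 H2]]. apply HWE in H1. subst. auto. }
  rewrite Hjump. unfold set_jump. split.
  - intros [b [Hb HB]]. exists (2 ^ b). split.
    + exists b. rewrite p1_pr, p2_pr. auto.
    + intros i Hi. apply canon_fin_pow2 in Hi. subst. auto.
  - intros [u [[b [Hb HW]] HB]]. rewrite p1_pr, p2_pr in *. subst.
    exists b. split; auto. apply HB, canon_fin_pow2. reflexivity.
Qed.

(** * Balls certified to lie inside finitely many basic balls *)

Section BallCheck.
Variable tDistLt : tprog.

(* Accessors for the ball code [n = pr j (pr p r)] with [p = pr s (pr k u)], and for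
   the pair [pr n i] seen inside a bounded quantifier over [i]. *)
Definition chk_r := tSnd.
Definition chk_p := tComp tFst tSnd.
Definition chk_s := tComp tFst chk_p.
Definition chk_k := tComp tFst (tComp tSnd chk_p).
Definition chk_u := tComp tSnd (tComp tSnd chk_p).
Definition chk_n := tFst.
Definition chk_i := tSnd.
Definition chk_c := tComp tSucc (tComp tFst (tComp tSnd chk_i)).
Definition chk_d := tComp tSucc (tComp tSnd (tComp tSnd chk_i)).
Definition chk_S := tComp tSucc (tComp chk_s chk_n).
Definition chk_shrunk :=
  tPair (tComp tPred (tSub (tMul chk_c chk_S) chk_d)) (tComp tPred (tMul chk_d chk_S)).

Definition chk_member :=
  tOr (tNot (tComp tTestbit (tPair (tComp chk_u chk_n) chk_i)))
      (tAnd (tLt chk_d (tMul chk_c chk_S))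
            (tNot (tComp tDistLt (tPair (tComp tFst chk_i) (tPair (tComp tFst chk_n) chk_shrunk))))).

Definition chk_radius :=
  tEq (tComp tSucc (tComp tSnd chk_r)) (tMul (tComp tSucc chk_p) (tComp tSucc chk_s)).

Definition tBallCheck := tNot (tAnd chk_radius (tComp (tBforall chk_member) (tPair tId chk_u))).

(* Read [tDistLt] as deciding [d(a_i, a_j) < q_r] on [pr i (pr j r)] (value [0] for yes).
   The ball [n] passes when its radius is [1/(s+1)] and, for each [i] in [D_u],
   [d(a_i, a_j) < q_{p2 i} - 1/(s+1)]; [(k, u)] is a label hidden in the numerator of
   the radius. *)
Definition ball_check (n : nat) : Prop :=
  let j := p1 n in let r := p2 n in let p := p1 r in let s := p1 p in let u := p2 (p2 p) in
  S (p2 r) = S p * S s /\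
  forall i, canon_fin u i ->
    let c := S (p1 (p2 i)) in let d := S (p2 (p2 i)) in
    d < c * S s /\ tfun tDistLt (pr (p1 i) (pr j (pr (c * S s - d - 1) (d * S s - 1)))) = 0.

Lemma tBallCheck_spec n : tfun tBallCheck n = 0 <-> ball_check n.
Proof.
  unfold tBallCheck, chk_radius, chk_member, ball_check, canon_fin.
  cbn [tfun tNot tAnd tOr tEq tLt tComp tPair tFst tSnd tId tBforall tExt tTestbit tLift2
       tMul tSub tPred tSucc chk_r chk_p chk_s chk_k chk_u chk_n chk_i chk_c chk_d chk_S chk_shrunk].
  repeat setoid_rewrite p1_pr. repeat setoid_rewrite p2_pr. repeat setoid_rewrite nonzero_b2n.
  assert (B0 : forall b, Nat.b2n b = 0 <-> b = false) by (intros []; simpl; intuition discriminate).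
  rewrite B0, Bool.negb_false_iff, Bool.andb_true_iff, Nat.eqb_eq, bforall_spec.
  apply and_iff_compat_l. repeat setoid_rewrite <- Nat.sub_1_r.
  split.
  - intros H i Hi. specialize (H i (canon_fin_lt _ _ Hi)). rewrite Hi in H. simpl in H.
    apply Bool.andb_true_iff in H as [H1 H2]. apply Nat.ltb_lt in H1. split; auto.
    unfold nonzero in H2. rewrite Bool.negb_involutive in H2. apply Nat.eqb_eq in H2. auto.
  - intros H i _. destruct (Nat.testbit _ i) eqn:E; [|reflexivity]. cbn [negb orb].
    destruct (H i E) as [H1 H2]. apply Bool.andb_true_iff. split; [apply Nat.ltb_lt; auto|].
    unfold nonzero. rewrite H2. reflexivity.
Qed.

Definition label_k n := p1 (p2 (p1 (p2 n))).
Definition label_u n := p2 (p2 (p1 (p2 n))).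

Definition enum_prog (We F : prf) : prf :=
  PComp PSnd (PPair (PComp zero_only (prog tBallCheck))
                    (PPair (PComp We (prog chk_k)) (PComp F (prog (tPair chk_k chk_u))))).

Lemma enum_prog_dom We F n : (exists v, eval (enum_prog We F) n v) <->
  ball_check n /\ (exists v, eval We (label_k n) v) /\
  exists v, eval F (pr (label_k n) (label_u n)) v.
Proof.
  unfold enum_prog. split.
  - intros [v H]. apply eval_comp_inv in H as [y [H1 _]].
    apply eval_pair_inv in H1 as [y1 [y2 [-> [H3 H4]]]].
    apply eval_comp_inv in H3 as [z [Hz1 Hz2]]. apply zero_only_eval in Hz2 as [-> _].
    apply eval_pair_inv in H4 as [w1 [w2 [-> [H5 H6]]]].
    apply eval_comp_inv in H5 as [z1 [Hz3 Hz4]]. apply eval_comp_inv in H6 as [z2 [Hz5 Hz6]].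
    rewrite (eval_functional _ _ _ Hz3 _ (tfun_spec _ _)) in Hz4.
    rewrite (eval_functional _ _ _ Hz5 _ (tfun_spec _ _)) in Hz6.
    split; [|split; eauto].
    apply tBallCheck_spec. symmetry. eapply eval_functional; [exact Hz1 | apply tfun_spec].
  - intros [H1 [[v1 H2] [v2 H3]]]. apply tBallCheck_spec in H1.
    exists (p2 (pr 0 (pr v1 v2))). apply ev_comp with (y := pr 0 (pr v1 v2)); [|apply ev_snd].
    apply ev_pair.
    + eapply ev_comp; [apply tfun_spec|]. rewrite H1. apply zero_only_eval; auto.
    + apply ev_pair; eapply ev_comp; [apply tfun_spec | exact H2 | apply tfun_spec | exact H3].
Qed.

Lemma enumerating_index (F : prf) : exists h : nat -> nat, recursive_fun h /\
  (forall m n, h m = h n -> m = n) /\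
  forall e n, W (h e) n <->
    ball_check n /\ W e (label_k n) /\ exists v, eval F (pr (label_k n) (label_u n)) v.
Proof.
  destruct (code_surj zero_only) as [g Hg], (code_surj (prog tBallCheck)) as [a Ha],
    (code_surj (prog chk_k)) as [b Hb], (code_surj F) as [f Hf],
    (code_surj (prog (tPair chk_k chk_u))) as [c Hc].
  exists (fun e => idx_comp 4 (idx_pair (idx_comp g a) (idx_pair (idx_comp e b) (idx_comp f c)))).
  split; [|split].
  - exists (prog (tIdxComp (tConst 4) (tIdxPair (tIdxComp (tConst g) (tConst a))
                  (tIdxPair (tIdxComp tId (tConst b)) (tIdxComp (tConst f) (tConst c)))))).
    intro n. apply tfun_spec.
  - intros m n H. apply idx_comp_inj in H as [_ H]. apply idx_pair_inj in H as [_ H].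
    apply idx_pair_inj in H as [H _]. apply idx_comp_inj in H as [H _]. auto.
  - intros e n. unfold W. repeat rewrite ?code_idx_comp, ?code_idx_pair.
    rewrite Hg, Ha, Hb, Hf, Hc. apply (enum_prog_dom (code e) F n).
Qed.
End BallCheck.

(** * Direction from enumeration reducibility to 1-reducibility *)

Open Scope R_scope.

Lemma q_pr a b : q (pr a b) = INR (S a) / INR (S b).
Proof. unfold q. rewrite p1_pr, p2_pr. reflexivity. Qed.

Lemma INR_S_pos n : 0 < INR (S n).
Proof. apply lt_0_INR. lia. Qed.

Lemma two_div_S_lt (eps : R) : 0 < eps -> exists s, forall s', (s <= s')%nat -> 2 / INR (S s') < eps.
Proof.
  intro H. destruct (archimed_cor1 (eps / 2)) as [N [HN HN0]]; [lra|].
  exists N. intros s' Hs'. assert (0 < INR N) by (apply lt_0_INR; lia).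
  assert (INR N <= INR (S s')) by (apply le_INR; lia).
  assert (/ INR (S s') <= / INR N) by (apply Rinv_le_contravar; lra).
  unfold Rdiv. lra.
Qed.

Lemma two_div_S_lt_finite (Q : nat -> Prop) (eps : nat -> R) N :
  (forall i, (i < N)%nat -> Q i -> 0 < eps i) ->
  exists s, forall i, (i < N)%nat -> Q i -> 2 / INR (S s) < eps i.
Proof.
  intro H. enough (exists s, forall s', (s <= s')%nat ->
    forall i, (i < N)%nat -> Q i -> 2 / INR (S s') < eps i) as [s Hs]
    by (exists s; apply Hs; lia).
  induction N.
  - exists 0%nat. intros; lia.
  - destruct IHN as [s1 H1]; [intros; apply H; auto; lia|].
    destruct (classic (Q N)) as [HQ|HQ].
    + destruct (two_div_S_lt (eps N)) as [s2 H2]; [apply H; auto|].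
      exists (max s1 s2). intros s' Hs' i Hi Qi. destruct (Nat.eq_dec i N).
      * subst. apply H2. lia.
      * apply H1; auto; lia.
    + exists s1. intros s' Hs' i Hi Qi. destruct (Nat.eq_dec i N); [subst; contradiction|].
      apply H1; auto; lia.
Qed.

Lemma q_shrunk c d s : (d < c * S s)%nat -> (0 < d)%nat ->
  q (pr (c * S s - d - 1) (d * S s - 1)) = INR c / INR d - 1 / INR (S s).
Proof.
  intros H Hd. rewrite q_pr.
  replace (S (c * S s - d - 1)) with (c * S s - d)%nat by lia.
  replace (S (d * S s - 1)) with (d * S s)%nat by nia.
  rewrite minus_INR by lia. rewrite !mult_INR. pose proof (INR_S_pos s).
  assert (0 < INR d) by (apply lt_0_INR; lia). field. lra.
Qed.

Lemma q_radius r s : S (p2 r) = (S (p1 r) * S s)%nat -> q r = 1 / INR (S s).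
Proof.
  intro H. unfold q. rewrite H, mult_INR.
  pose proof (INR_S_pos (p1 r)). pose proof (INR_S_pos s). field. lra.
Qed.

Lemma lt_of_inv_S_lt_div c d s : (0 < d)%nat ->
  1 / INR (S s) < INR c / INR d -> (d < c * S s)%nat.
Proof.
  intros Hd H. apply INR_lt. rewrite mult_INR. pose proof (INR_S_pos s).
  assert (0 < INR d) by (apply lt_0_INR; lia).
  apply (Rmult_lt_compat_r (INR d * INR (S s))) in H; [|apply Rmult_lt_0_compat; lra].
  replace (1 / INR (S s) * (INR d * INR (S s))) with (INR d) in H by (field; lra).
  replace (INR c / INR d * (INR d * INR (S s))) with (INR c * INR (S s)) in H by (field; lra).
  exact H.
Qed.

Section Metric.
Variable Y : Type.
Variable MY : RecPresMetric Y.
Variable y : Y.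
Variable tDistLt : tprog.
Hypothesis tDistLt_spec : forall m, tfun tDistLt m = 0%nat <->
  Defs.dist MY (pt MY (p1 m)) (pt MY (p1 (p2 m))) < q (p2 (p2 m)).

Lemma ball_check_sound n : ball_check tDistLt n -> in_ball MY n y ->
  forall i, canon_fin (label_u n) i -> in_ball MY i y.
Proof.
  intros [Hr Hu] Hn i Hi. destruct (Hu i Hi) as [Hcd Hdist].
  apply tDistLt_spec in Hdist. repeat rewrite ?p1_pr, ?p2_pr in Hdist.
  rewrite q_shrunk in Hdist by lia.
  unfold in_ball in *. rewrite (q_radius _ _ Hr) in Hn. unfold q.
  pose proof (Defs.dist_tri _ MY y (pt MY (p1 n)) (pt MY (p1 i))).
  rewrite (Defs.dist_sym _ MY (pt MY (p1 n))) in H. lra.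
Qed.

Lemma ball_check_complete k u : (forall i, canon_fin u i -> in_ball MY i y) ->
  exists n, ball_check tDistLt n /\ label_k n = k /\ label_u n = u /\ in_ball MY n y.
Proof.
  intro Hu.
  destruct (two_div_S_lt_finite (canon_fin u)
              (fun i => q (p2 i) - Defs.dist MY y (pt MY (p1 i))) u) as [s Hs].
  { intros i _ Hi. apply Hu in Hi. unfold in_ball in Hi. lra. }
  pose proof (INR_S_pos s) as HSs.
  destruct (pt_dense _ MY y (1 / INR (S s))) as [j Hj]; [apply Rdiv_lt_0_compat; lra|].
  set (p := pr s (pr k u)).
  exists (pr j (pr p (S p * S s - 1))). unfold label_k, label_u, ball_check, in_ball.
  cbv zeta. repeat rewrite ?p1_pr, ?p2_pr. unfold p. repeat rewrite ?p1_pr, ?p2_pr. fold p.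
  assert (Hr : S (S p * S s - 1) = (S p * S s)%nat) by nia.
  split; [split|split; [reflexivity|split; [reflexivity|]]].
  - exact Hr.
  - intros i Hi. pose proof (Hs i (canon_fin_lt _ _ Hi) Hi) as Hsi. unfold q in Hsi at 1.
    set (c := S (p1 (p2 i))) in *. set (d := S (p2 (p2 i))) in *.
    assert (0 < INR c) by (apply lt_0_INR; unfold c; lia).
    assert (0 < INR d) by (apply lt_0_INR; unfold d; lia).
    pose proof (Defs.dist_nonneg _ MY y (pt MY (p1 i))).
    assert (Hcd : (d < c * S s)%nat).
    { apply lt_of_inv_S_lt_div; [unfold d; lia|].
      assert (1 / INR (S s) <= 2 / INR (S s)) by
        (unfold Rdiv; apply Rmult_le_compat_r; [left; apply Rinv_0_lt_compat|]; lra).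
      lra. }
    split; auto.
    apply tDistLt_spec. repeat rewrite ?p1_pr, ?p2_pr. rewrite q_shrunk by (auto; unfold d; lia).
    pose proof (Defs.dist_tri _ MY (pt MY (p1 i)) y (pt MY j)).
    rewrite (Defs.dist_sym _ MY (pt MY (p1 i)) y) in H2.
    assert (2 / INR (S s) = 2 * (1 / INR (S s))) by (field; lra). lra.
  - rewrite (q_radius (pr p (S p * S s - 1)) s) by (rewrite p1_pr, p2_pr; exact Hr).
    exact Hj.
Qed.

Lemma one_red_set_jump_of_e_red (A : nat -> Prop) :
  e_red A (Nbase MY y) -> one_red (set_jump A) (set_jump (Nbase MY y)).
Proof.
  intros [P [[F HF] HP]].
  destruct (enumerating_index tDistLt F) as [h [Hh [Hinj HWh]]].
  exists h. split; [auto | split; auto]. intro e. unfold set_jump, Nbase. split.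
  - intros [k [HW Hk]]. destruct (proj1 (HP k) Hk) as [u [HPu Hu]].
    destruct (ball_check_complete k u Hu) as [n [Hc [Hk' [Hu' Hn]]]].
    exists n. split; auto. apply HWh. rewrite Hk', Hu'. split; [|split]; auto. apply HF; auto.
  - intros [n [HW Hn]]. apply HWh in HW as [Hc [HW HFv]].
    exists (label_k n). split; auto. apply HP. exists (label_u n). split.
    + apply HF; auto.
    + exact (ball_check_sound n Hc Hn).
Qed.
End Metric.

Lemma recursive_set_tprog (A : nat -> Prop) :
  recursive_set A -> exists F : tprog, forall n, tfun F n = 0%nat <-> A n.
Proof.
  intros [f Hf].
  exists {| prog := f; tfun := fun n => proj1_sig (constructive_indefinite_description _ (Hf n));
            tfun_spec := fun n => proj1 (proj2_sig (constructive_indefinite_description _ (Hf n))) |}.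
  intro n. exact (proj2 (proj2_sig (constructive_indefinite_description _ (Hf n)))).
Qed.

Theorem lemma2p9 (X Y : Type) (MX : RecPresMetric X) (MY : RecPresMetric Y)
  (x : X) (y : Y) :
  M_red MX x MY y <-> one_red (jump MX x) (jump MY y).
Proof.
  split.
  - destruct (recursive_set_tprog _ (rec_lt Y MY)) as [tDistLt HDistLt].
    exact (one_red_set_jump_of_e_red Y MY y tDistLt HDistLt (Nbase MX x)).
  - exact (e_red_of_one_red_set_jump (Nbase MX x) (Nbase MY y)).
Qed.
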